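(* Consider the multi-agent setting described in the context, with parameters $\alpha>0$ and $F\in\mathbb Z_{\ge0}$. Assume: - the set $\mathcal A$ of misbehaving agents is $F$-local; - the digraph $\mathcal D$ is $(2F+1)$-robust. Then the normal agents achieve Finite-Time Resilient Consensus. That is, for trajectories $x_{\mathcal N}:[0,\infty)\to\mathbb R^{|\mathcal N|}$ of the normal agents: (i) $x_i(t)\in[m(x_{\mathcal N}(0)),M(x_{\mathcal N}(0))]$ for all $t\ge0$ and all $i\in\mathcal N$; (ii) there exists $T:\mathbb R^{|\mathcal N|}\to\mathbb R_{\ge0}$ such that $V(x_{\mathcal N}(t))=0$, equivalently $x_{\mathcal N}(t)\in\mathrm{span}(\mathbf 1)$, for all $t\ge T(x_{\mathcal N}(0))$.
   Context: Setting. Let $\mathcal D=(\mathcal V,\mathcal E)$ be a digraph with $\mathcal V=\{1,\dots,n\}$ and $n\ge2$. An edge $(i,j)\in\mathcal E$ means that agent $j$ receives information from agent $i$. The in-neighbor set of $i$ is $\mathcal V_i=\{j:(j,i)\in\mathcal E\}$, and $\mathcal J_i=\mathcal V_i\cup\{i\}$. - A nonempty $S\subset\mathcal V$ is $r$-reachable if some $i\in S$ has $|\mathcal V_i\setminus S|\ge r$. - $\mathcal D$ is $r$-robust if for every pair of nonempty disjoint subsets of $\mathcal V$, at least one of them is $r$-reachable. Dynamics and communication. Each agent has a scalar state with $\dot x_i(t)=u_i(t)$, with initial time $0$. Fix a strictly increasing $g:\mathbb R\to\mathbb R$ (not necessarily continuous). At time $t$, agent $i$ receives from each in-neighbor $j$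 a value $g(x^i_j(t))$. The agents are partitioned into normal agents $\mathcal N$ and misbehaving agents $\mathcal A$. - A normal agent $j$ sends $g(x_j(t))$ to all its out-neighbors, so $x^i_j=x_j$, and updates via the FTRC protocol. - Misbehaving agents may use arbitrary inputs and may send arbitrary, possibly different, values to different out-neighbors. The only restriction is that $t\mapsto g(x^i_k(t))$ is Lebesgue measurable for all $k\in\mathcal A$ and $i\in\mathcal N$. - $\mathcal A$ is $F$-local if $|\mathcal V_i\cap\mathcal A|\le F$ for every $i\in\mathcal V\setminus\mathcal A$. FTRC protocol for a normal agent $i$ at time $t$: 1. Sort the received values $g(x^i_j(t))$, $j\in\mathcal V_i$. 2. If fewer than $F$ values are strictly larger than $g(x_i(t))$, remove all values strictly larger than $g(x_i(t))$; otherwise remove exactly the $F$ largest values. 3. Likewise, if fewer than $F$ values are strictly smaller than $g(x_i(t))$, remove all values strictly smaller; otherwise remove exactly the $F$ smallest values. 4. With $\mathcal R_i(t)$ the set of agents whose values were removed, set $u_i(t)=\alpha\,\mathrm{sign}\big(\sum_{j\in\mathcal J_i\setminus\mathcal R_i(t)}(g(x^i_j(t))-g(x_i(t)))\big)$, where $x^i_i=x_i$ and $\mathrm{sign}(0)=0$. Trajectories and auxiliary functions. Write $x_{\mathcal N}=(x_{\mathcal N_1},\dots,x_{\mathcal N_{|\mathcal N|}})^T$ for a fixed ordering of $\mathcal N$. A trajectory of the normal agents on an interval $I\ni0$ is an absolutely continuous $x_{\mathcal N}:I\to\mathbb R^{|\mathcal N|}$ with $\dot x_{\mathcal N_k}(t)=u_{\mathcal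 N_k}(t)$ for all $k$ and almost every $t\in I$. For $x\in\mathbb R^{|\mathcal N|}$, set $M(x)=\max_k x_k$, $m(x)=\min_k x_k$ and $V(x)=M(x)-m(x)$. Here $\mathbf 1$ is the all-ones vector. *)

From mathcomp Require Import all_boot all_order all_algebra.
From mathcomp Require Import all_classical all_reals all_analysis.
Import Order.TTheory GRing.Theory Num.Theory numFieldNormedType.Exports.

Set Implicit Arguments.
Unset Strict Implicit.
Unset Printing Implicit Defensive.

Local Open Scope ring_scope.

Section FTRC.
Variable R : realType.
Variable n : nat.

(* E j i  means (j,i) is an edge: agent i receives information from agent j *)

Definition in_nbrs (E : rel 'I_n) (i : 'I_n) : {set 'I_n} := [set j | E j i].

Definition r_reachable (E : rel 'I_n) (S : {set 'I_n}) (r : nat) : Prop :=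
  exists2 i, i \in S & (r <= #|in_nbrs E i :\: S|)%N.

Definition r_robust (E : rel 'I_n) (r : nat) : Prop :=
  forall S1 S2 : {set 'I_n}, S1 != finset.set0 -> S2 != finset.set0 -> [disjoint S1 & S2] ->
    r_reachable E S1 r \/ r_reachable E S2 r.

Definition F_local (E : rel 'I_n) (A : {set 'I_n}) (F : nat) : Prop :=
  forall i, i \notin A -> (#|in_nbrs E i :&: A| <= F)%N.

(* x t j : state of (normal) agent j at time t;
   y t i k : the value x^i_k(t) that misbehaving agent k pretends to agent i.
   Received value by i from j at time t: g(x^i_j(t)). *)
Definition recv (N : {set 'I_n}) (g : R -> R) (x : R -> 'I_n -> R)
  (y : R -> 'I_n -> 'I_n -> R) (t : R) (i j : 'I_n) : R :=
  if j \in N then g (x t j) else g (y t i j).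

(* The received values are sorted increasingly; the min(#larger, F) largest
   values (all strictly larger than g(x_i)) and the min(#smaller, F) smallest
   values (all strictly smaller than g(x_i)) are removed; the remaining values
   together with the agent's own value (j = i, contributing 0) are summed. *)
Definition ftrc_input (E : rel 'I_n) (N : {set 'I_n}) (F : nat) (alpha : R)
  (g : R -> R) (x : R -> 'I_n -> R) (y : R -> 'I_n -> 'I_n -> R)
  (t : R) (i : 'I_n) : R :=
  let own := g (x t i) in
  let s := sort <=%R [seq recv N g x y t i j | j <- enum (in_nbrs E i)] in
  let nsmall := minn (count (fun v => v < own) s) F in
  let nlarge := minn (count (fun v => own < v) s) F in
  let kept := drop nsmall (take (size s - nlarge) s) in
  alpha * Num.sg (\sum_(v <- own :: kept) (v - own)).

Local Open Scope classical_set_scope.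
Definition lebesgue_measurable_set (A : set R) : Prop :=
  ((wlength (R:=R) idfun)^*%mu).-cara.-measurable A.

Definition lebesgue_measurable_fun (D : set R) (f : R -> R) : Prop :=
  lebesgue_measurable_set D /\
  forall B : set R, measurable B -> lebesgue_measurable_set (D `&` f @^-1` B).

Definition abs_cont_on (a b : R) (f : R -> R) : Prop :=
  forall e : R, 0 < e -> exists2 d : R, 0 < d &
    forall (k : nat) (s u : 'I_k -> R),
      (forall p, a <= s p /\ s p <= u p /\ u p <= b) ->
      (forall p q, p != q -> u p <= s q \/ u q <= s p) ->
      \sum_p (u p - s p) < d ->
      \sum_p `|f (u p) - f (s p)| < e.

Definition ftrc_trajectory (E : rel 'I_n) (N : {set 'I_n}) (F : nat)
  (alpha : R) (g : R -> R) (y : R -> 'I_n -> 'I_n -> R)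
  (x : R -> 'I_n -> R) : Prop :=
  forall k, k \in N ->
    (forall b : R, 0 <= b -> abs_cont_on 0 b (fun t => x t k)) /\
    {ae (@lebesgue_measure R), forall t : R, 0 < t ->
       is_derive t (1 : R) (fun s => x s k) (ftrc_input E N F alpha g x y t k)}.

Definition normal_agent (N : {set 'I_n}) := {i : 'I_n | i \in N}.

Definition stateN (N : {set 'I_n}) (x : R -> 'I_n -> R) (t : R)
  : {ffun normal_agent N -> R} :=
  [ffun i : normal_agent N => x t (sval i)].

(* max / min of the entries of a vector (convention 0 for the empty vector) *)
Definition Mvec (S : finType) (v : {ffun S -> R}) : R :=
  \big[Num.max/head 0 (codom v)]_(a <- codom v) a.
Definition mvec (S : finType) (v : {ffun S -> R}) : R :=
  \big[Num.min/head 0 (codom v)]_(a <- codom v) a.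
Definition Vvec (S : finType) (v : {ffun S -> R}) : R := Mvec v - mvec v.

End FTRC.

From mathcomp Require Import all_boot all_order all_algebra.
From mathcomp Require Import all_classical all_reals all_analysis.
From mathcomp Require Import measurable_realfun ring lra zify.
Import Order.TTheory GRing.Theory Num.Theory numFieldNormedType.Exports.
Local Open Scope classical_set_scope.
Local Open Scope ring_scope.

Set Implicit Arguments.
Unset Strict Implicit.
Unset Printing Implicit Defensive.

(* Let M and m be the largest and the smallest state of the normal agents.  A
   normal agent attaining M receives at most F values above its own, all of
   them from misbehaving in-neighbours, and trimming discards them: its input
   is <= 0, so the left upper Dini derivative of M is <= 0 wherever the normal
   states are differentiable; symmetrically for m.  While M > m, the two
   extreme level sets are disjoint, and (2F+1)-robustness gives an extreme
   agent with 2F+1 in-neighbours outside its level set; at most F of them are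
   misbehaving, so after trimming a strictly smaller (resp. larger) value
   survives and its input is exactly -alpha (resp. alpha).  Hence the spread
   M - m decreases at rate alpha and vanishes by time (M(0) - m(0)) / alpha.
   These almost-everywhere inequalities are integrated by a Dini-type growth
   lemma for absolutely continuous functions (M and m are absolutely
   continuous as extremes of finitely many such functions), proved by a
   continuous induction in which the exceptional null set is covered by an
   open set of small measure. *)

Section AbsCont.
Variable R : realType.
Implicit Types (a b c : R) (h : R -> R).

Definition ac_modulus a b h e d := forall m (s u : 'I_m -> R),
  (forall p, a <= s p /\ s p <= u p /\ u p <= b) ->
  (forall p q, p != q -> u p <= s q \/ u q <= s p) ->
  \sum_p (u p - s p) < d -> \sum_p `|h (u p) - h (s p)| < e.

Lemma ac_modulus_le a b h e d d' : d' <= d ->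
  ac_modulus a b h e d -> ac_modulus a b h e d'.
Proof. by move=> d'd hd m s u hs hdis /lt_le_trans/(_ d'd); exact: hd. Qed.

Definition intervals_within (L : seq (R * R)) a b :=
  pairwise (fun p q => p.2 <= q.1) L /\
  forall p, p \in L -> [/\ a <= p.1, p.1 <= p.2 & p.2 <= b].

Lemma abs_cont_on_seq a b h : abs_cont_on a b h -> forall e, 0 < e ->
  exists2 d, 0 < d & forall L, intervals_within L a b ->
    \sum_(p <- L) (p.2 - p.1) < d -> \sum_(p <- L) `|h p.2 - h p.1| < e.
Proof.
move=> hac e e0; have [d d0 hd] := hac e e0; exists d => // L [pw inL] sL.
pose s (p : 'I_(size L)) := (nth (0, 0) L p).1.
pose u (p : 'I_(size L)) := (nth (0, 0) L p).2.
rewrite (big_nth (0, 0)) big_mkord; apply: (hd _ s u).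
- by move=> p; have [? ? ?] := inL _ (mem_nth (0, 0) (ltn_ord p)).
- move=> p q; have /(pairwiseP (0, 0)) P := pw.
  by rewrite neq_ltn => /orP[pq|qp]; [left|right]; apply: P; rewrite ?inE.
- by move: sL; rewrite (big_nth (0, 0)) big_mkord.
Qed.

Lemma abs_cont_on_cont a b h : abs_cont_on a b h -> forall e, 0 < e ->
  exists2 d, 0 < d & forall s u, a <= s -> s <= u -> u <= b -> u - s < d ->
    `|h u - h s| < e.
Proof.
move=> /abs_cont_on_seq hac e e0; have [d d0 hd] := hac e e0.
exists d => // s u as_ su ub usd.
have := hd [:: (s, u)]; rewrite !big_seq1; apply => //; split => //.
by move=> p; rewrite inE => /eqP ->.
Qed.

Lemma abs_cont_on_sub a a' b b' h : a <= a' -> b' <= b ->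
  abs_cont_on a b h -> abs_cont_on a' b' h.
Proof.
move=> aa' b'b hac e e0; have [d d0 hd] := hac e e0; exists d => // m s u hs.
apply: hd => p; have [? [? ?]] := hs p.
by split; [exact: le_trans aa' _ | split=> //; exact: le_trans b'b].
Qed.

Lemma abs_cont_on_linear a b c : abs_cont_on a b ( *%R c).
Proof.
move=> e e0; have c1 : 0 < `|c| + 1 by rewrite ltr_wpDl.
exists (e / (`|c| + 1)); first by rewrite divr_gt0.
move=> m s u hs _ hsum.
have su p : 0 <= u p - s p by have [_ [? _]] := hs p; rewrite subr_ge0.
have -> : \sum_p `|c * u p - c * s p| = `|c| * \sum_p (u p - s p).
  rewrite mulr_sumr; apply: eq_bigr => p _.
  by rewrite -mulrBr normrM (ger0_norm (su p)).
apply: (@le_lt_trans _ _ ((`|c| + 1) * \sum_p (u p - s p))).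
  by rewrite ler_wpM2r ?lerDl ?sumr_ge0.
by rewrite -ltr_pdivlMl // mulrC.
Qed.

Lemma exists_pos_forall_fin (J : finType) (P : J -> R -> Prop) :
  (forall j d d', 0 < d' -> d' <= d -> P j d -> P j d') ->
  (forall j, exists2 d, 0 < d & P j d) -> exists2 d, 0 < d & forall j, P j d.
Proof.
move=> P_anti P_ex; have /choice[dj /all_and2[dj0 Pdj]] :
    forall j, exists d, 0 < d /\ P j d.
  by move=> j; have [d d0 Pd] := P_ex j; exists d.
exists (\big[Num.min/1]_j dj j); first by apply/bigmin_gtP; split.
by move=> j; apply: P_anti (Pdj j); [apply/bigmin_gtP; split|exact: bigmin_le].
Qed.

Lemma abs_cont_on_dominated a b (J : finType) (f : J -> R -> R) h :
  (forall j, abs_cont_on a b (f j)) ->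
  (forall s u, `|h u - h s| <= \sum_j `|f j u - f j s|) ->
  abs_cont_on a b h.
Proof.
move=> f_ac hf e e0; pose e' := e / (#|J|%:R + 1).
have J1 : 0 < #|J|%:R + 1 :> R by rewrite ltr_wpDl.
have e'0 : 0 < e' by rewrite divr_gt0.
have [d d0 hd] := @exists_pos_forall_fin J (fun j => ac_modulus a b (f j) e')
  (fun j d d' _ => @ac_modulus_le _ _ _ _ _ _) (fun j => f_ac j e' e'0).
exists d => // m s u hs hdis hsum.
apply: (@le_lt_trans _ _ (\sum_j \sum_p `|f j (u p) - f j (s p)|)).
  by rewrite exchange_big; apply: ler_sum => p _; exact: hf.
apply: (@le_lt_trans _ _ (#|J|%:R * e')).
  rewrite -sum1_card natr_sum mulr_suml.
  by apply: ler_sum => j _; rewrite mul1r ltW // hd.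
by rewrite /e' mulrA ltr_pdivrMr // mulrDr mulr1 mulrC ltrDl.
Qed.

Lemma abs_cont_onD a b h1 h2 : abs_cont_on a b h1 -> abs_cont_on a b h2 ->
  abs_cont_on a b (h1 \+ h2).
Proof.
move=> h1_ac h2_ac.
apply: (@abs_cont_on_dominated _ _ _ (fun j : bool => if j then h1 else h2)).
  by case.
by move=> s u; rewrite big_bool /= opprD addrACA ler_normD.
Qed.

Lemma abs_cont_onN a b h :
  abs_cont_on a b h -> abs_cont_on a b (fun s => - h s).
Proof.
move=> h_ac e e0; have [d d0 hd] := h_ac e e0.
exists d => // m s u hs hdis hsum.
by under eq_bigr do rewrite -opprD normrN; exact: hd.
Qed.

Lemma abs_cont_on_max a b (J : finType) (f : J -> R -> R) M :
  (forall j, abs_cont_on a b (f j)) -> (forall s j, f j s <= M s) ->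
  (forall s, exists j, M s = f j s) -> abs_cont_on a b M.
Proof.
move=> f_ac fM Mf; apply: abs_cont_on_dominated f_ac _ => s u.
have term_le j : `|f j u - f j s| <= \sum_j `|f j u - f j s|.
  by rewrite (bigD1 j) //= lerDl sumr_ge0.
rewrite ler_norml; apply/andP; split.
  have [j ->] := Mf s; have := fM u j; have := ler_norm (f j s - f j u).
  by rewrite distrC; have := term_le j; lra.
have [j ->] := Mf u; have := fM s j; have := ler_norm (f j u - f j s).
by have := term_le j; lra.
Qed.

End AbsCont.

Section Dini.
Variable R : realType.
Implicit Types (t c : R) (h : R -> R).

Definition left_dini_le h t c := forall e, 0 < e -> exists2 r, 0 < r &
  forall s, t - r < s -> s <= t -> h t - h s <= (c + e) * (t - s).

Lemma left_dini_le_trans h t c c' : c <= c' -> left_dini_le h t c ->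
  left_dini_le h t c'.
Proof.
move=> cc' hc e e0; have [r r0 hr] := hc e e0; exists r => // s ts st.
by apply: le_trans (hr s ts st) _; rewrite ler_wpM2r ?subr_ge0 // lerD2r.
Qed.

Lemma left_dini_leD h1 h2 t c1 c2 :
  left_dini_le h1 t c1 -> left_dini_le h2 t c2 ->
  left_dini_le (h1 \+ h2) t (c1 + c2).
Proof.
move=> d1 d2 e e0; have e2 : 0 < e / 2 by rewrite divr_gt0.
have [r1 r10 hr1] := d1 _ e2; have [r2 r20 hr2] := d2 _ e2.
exists (Num.min r1 r2); first by rewrite lt_min r10 r20.
move=> s; rewrite ltrBlDr -ltrBlDl lt_min => /andP[s1 s2] st.
have /hr1/(_ st) : t - r1 < s by lra.
have /hr2/(_ st) : t - r2 < s by lra.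
have -> : (c1 + c2 + e) * (t - s) =
    (c1 + e / 2) * (t - s) + (c2 + e / 2) * (t - s) by field.
by rewrite /=; lra.
Qed.

Lemma left_dini_le_touch h M t c : (forall s, h s <= M s) -> M t = h t ->
  left_dini_le h t c -> left_dini_le M t c.
Proof.
move=> hM Mt hc e e0; have [r r0 hr] := hc e e0; exists r => // s ts st.
by have := hr s ts st; have := hM s; rewrite Mt; lra.
Qed.

Lemma is_derive_left_dini_le h t v :
  is_derive t (1 : R) h v -> left_dini_le h t v.
Proof.
move=> hd e e0.
have hq : (fun d : R => d^-1 *: ((h \o shift t) (d *: 1) - h t)) @ 0^' --> v.
  rewrite -(@derive_val _ _ _ t 1 h v hd).
  exact: (@ex_derive _ _ _ t 1 h v hd).
move/cvgrPdist_le : hq => /(_ e e0).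
rewrite near_withinE => /nbhs_ballP[r r0 hr]; exists r => // s ts st.
have [->|sNt] := eqVneq s t; first by rewrite !subrr mulr0.
have st0 : s - t != 0 by rewrite subr_eq0.
have ts' : `|0 - (s - t)| < r.
  by rewrite sub0r opprB ger0_norm ?subr_ge0 //; lra.
have := hr (s - t) ts' st0; rewrite /shift /= scaler1 subrK.
set q := _ *: _ => /ler_normlP[hq _].
have -> : h t - h s = q * (t - s) by rewrite /q -[_ *: _]/(_ * _); field.
by rewrite ler_wpM2r ?subr_ge0 //; lra.
Qed.

End Dini.

#[local] Instance lebesgue_ae_filter (R : realType) :
  Filter (almost_everywhere (@lebesgue_measure R)) :=
  ae_filter_ringOfSetsType _.

Section Growth.
Variable R : realType.
Local Notation mu := (@lebesgue_measure R).
Implicit Types (a b c t : R) (h k : R -> R).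

Definition left_nonincr_at k t :=
  exists2 r, 0 < r & forall s, t - r < s -> s <= t -> k t <= k s.

Section ContinuousInduction.
Variables (k : R -> R) (a b : R) (U : set R).
Hypotheses (ab : a <= b) (oU : open U) (k_ac : abs_cont_on a b k).
Hypothesis k_left : forall t, a <= t <= b -> ~ U t -> left_nonincr_at k t.

(* Sweeping [x, b] from right to left, [L] records the pieces of [U] crossed,
   on which [k] may have increased; elsewhere [k] cannot increase. *)
Definition tail_bound eta x := exists2 L, intervals_within L x b &
  ((\sum_(p <- L) (p.2 - p.1))%:E <= mu (U `&` `]x, b]))%E /\
  k b - k x <= \sum_(p <- L) `|k p.2 - k p.1| + eta.

Let measurable_U_itv x : measurable (U `&` `]x, b]).
Proof. exact: measurableI (open_measurable oU) (measurable_itv _). Qed.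

Lemma tail_bound_right eta : 0 <= eta -> tail_bound eta b.
Proof.
move=> eta0; exists [::]; first by split.
by rewrite !big_nil measure_ge0 subrr add0r.
Qed.

Lemma tail_bound_step_le eta eta' x y : tail_bound eta x -> y <= x ->
  k x - k y <= eta' -> tail_bound (eta + eta') y.
Proof.
move=> [L [pw inL] [mL hL]] yx hxy; exists L.
  by split=> // p /inL[? ? ?]; split=> //; exact: le_trans yx _.
split; last by lra.
apply: le_trans mL _.
apply: le_measure; rewrite ?inE; try exact: measurable_U_itv.
move=> z [Uz] /=; rewrite !in_itv /= => /andP[xz ->]; split=> //.
by rewrite (le_lt_trans yx xz).
Qed.

Lemma tail_bound_step_in eta x y : tail_bound eta x -> y <= x -> x <= b ->
  `]y, x] `<=` U -> tail_bound eta y.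
Proof.
move=> [L [pw inL] [mL hL]] yx xb yxU; exists ((y, x) :: L).
  split=> [|p]; first by rewrite /= pw andbT; apply/allP => p /inL[].
  rewrite inE => /predU1P[->|/inL[? ? ?]] //.
  by split=> //; exact: le_trans yx _.
rewrite !big_cons /=; split; last by have := ler_norm (k x - k y); lra.
have mu_yx : mu `]y, x] = (x - y)%:E.
  rewrite lebesgue_measure_itv /= lte_fin.
  by case: ltgtP yx => // -> _; rewrite subrr.
have disj : `]y, x] `&` (U `&` `]x, b]) = set0.
  apply/seteqP; split => // z [] /=; rewrite !in_itv /= => /andP[_ zx] [_].
  by move=> /andP[xz _]; move: (lt_le_trans xz zx); rewrite ltxx.
rewrite EFinD -mu_yx; apply: le_trans (leeD2l _ mL) _.
rewrite -measureU //; try exact: measurable_U_itv.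
apply: le_measure; rewrite ?inE; try exact: measurable_U_itv.
  exact: measurableU (measurable_itv _) (measurable_U_itv _).
move=> z [yzx|[Uz xzb]]; split=> //; first exact: yxU.
  move: yzx; rewrite /= !in_itv /= => /andP[-> zx].
  by rewrite (le_trans zx xb).
by move: xzb; rewrite /= !in_itv /= => /andP[/(le_lt_trans yx) -> ->].
Qed.

Definition tail_reached :=
  [set x | a <= x <= b /\ forall eta, 0 < eta -> tail_bound eta x].

Let tail_reached_b : tail_reached b.
Proof.
split=> [|eta /ltW]; [by rewrite ab lexx | exact: tail_bound_right].
Qed.

Let has_inf_tail_reached : has_inf tail_reached.
Proof. by split; [exists b | exists a => x [/andP[]]]. Qed.

Lemma tail_reached_inf : tail_reached (inf tail_reached).
Proof.
set xs := inf tail_reached.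
have axs : a <= xs.
  by apply: lb_le_inf; [exact: has_inf_tail_reached.1 | move=> x [/andP[]]].
have xsb : xs <= b := ge_inf has_inf_tail_reached.2 tail_reached_b.
split=> [|eta eta0]; first by rewrite axs xsb.
have eta2 : 0 < eta / 2 by rewrite divr_gt0.
have [d d0 hd] := abs_cont_on_cont k_ac eta2.
have [s [/andP[as_ sb] Is] sxs] := inf_adherent d0 has_inf_tail_reached.
have xss : xs <= s.
  by apply: (ge_inf has_inf_tail_reached.2); split=> //; rewrite as_.
have sxs_d : s - xs < d by rewrite -/xs in sxs; lra.
rewrite [eta](splitr eta); apply: (tail_bound_step_le (Is _ eta2) xss).
by have := hd xs s axs xss sb sxs_d; rewrite ltr_norml; lra.
Qed.

Lemma tail_reached_step x : tail_reached x -> a < x ->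
  exists2 y, tail_reached y & y < x.
Proof.
move=> [/andP[_ xb] Ix] ax.
have [r r0 hr] : exists2 r, 0 < r & `]x - r, x] `<=` U \/
    forall s, x - r < s -> s <= x -> k x <= k s.
  have [Ux|nUx] := pselect (U x).
    have /nbhs_ballP[r r0 sub] := oU Ux; exists r => //; left => z.
    rewrite /= in_itv /= => /andP[xz zx]; apply: sub; rewrite -ball_normE /=.
    by rewrite ger0_norm ?subr_ge0 //; lra.
  have xab : a <= x <= b by rewrite (ltW ax) xb.
  by have [r r0 hr] := k_left xab nUx; exists r => //; right.
pose y := Num.max (x - r / 2) a.
have yx : y < x by rewrite gt_max ax andbT ltrBlDr ltrDl divr_gt0.
have ay : a <= y by rewrite le_max lexx orbT.
have xry : x - r < y by rewrite lt_max; apply/orP; left; lra.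
exists y => //; split=> [|eta eta0]; first by rewrite ay (le_trans (ltW yx)).
case: hr => [sub|hk].
  apply: tail_bound_step_in (Ix _ eta0) (ltW yx) xb _ => z.
  rewrite /= in_itv /=.
  by move=> /andP[yz zx]; apply: sub; rewrite /= in_itv /= zx (lt_trans xry).
rewrite -[eta]addr0; apply: tail_bound_step_le (Ix _ eta0) (ltW yx) _.
by rewrite subr_le0; apply: hk => //; exact: ltW.
Qed.

Lemma tail_bound_left eta : 0 < eta -> tail_bound eta a.
Proof.
have [/andP[axs _] Ixs] := tail_reached_inf.
suff -> : a = inf tail_reached by exact: Ixs.
apply/eqP; rewrite eq_le axs /= leNgt; apply/negP => /tail_reached_step.
case/(_ tail_reached_inf) => y Ry; apply/negP; rewrite -leNgt.
exact: ge_inf has_inf_tail_reached.2 _ Ry.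
Qed.

End ContinuousInduction.

Lemma abs_cont_nonincr_ae k a b : a <= b -> abs_cont_on a b k ->
  {ae mu, forall t, a <= t <= b -> left_nonincr_at k t} -> k b <= k a.
Proof.
move=> ab k_ac [Z [mZ Z0 hZ]]; apply/ler_addgt0Pr => e e0.
have e2 : 0 < e / 2 by rewrite divr_gt0.
have [d d0 hd] := abs_cont_on_seq k_ac e2.
have Zoo : (mu Z < +oo)%E by rewrite Z0 ltry.
have [U [oU ZU mUZ]] := lebesgue_regularity_outer mZ Zoo d0.
have muU : (mu U < d%:E)%E.
  rewrite (measureDI mu (open_measurable oU) mZ) (setIidr ZU).
  (* [Z0] only matches up to conversion of the structure instance of [mu]. *)
  by rewrite [X in (_ + X)%E](_ : _ = 0%E) ?adde0 //; exact: Z0.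
have k_left t : a <= t <= b -> ~ U t -> left_nonincr_at k t.
  by move=> tab nUt; apply: contrapT => nk; apply/nUt/ZU/hZ => /(_ tab).
have [L hL [mL hk]] := tail_bound_left ab oU k_ac k_left e2.
have : \sum_(p <- L) `|k p.2 - k p.1| < e / 2.
  apply: hd => //; rewrite -lte_fin; apply: le_lt_trans mL (le_lt_trans _ muU).
  apply: le_measure; rewrite ?inE; last by move=> ? [].
    exact: measurableI (open_measurable oU) (measurable_itv _).
  exact: open_measurable.
lra.
Qed.

Lemma abs_cont_left_dini_growth h a b c : a <= b -> abs_cont_on a b h ->
  {ae mu, forall t, a <= t <= b -> left_dini_le h t c} ->
  h b - h a <= c * (b - a).
Proof.
move=> ab h_ac h_dini.
suff growth e : 0 < e -> h b - h a <= (c + e) * (b - a).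
  apply/ler_addgt0Pr => e e0; have ba1 : 0 < b - a + 1 by lra.
  have := growth _ (divr_gt0 e0 ba1).
  have : e / (b - a + 1) * (b - a) <= e.
    by rewrite mulrAC ler_pdivrMr // ler_wpM2l ?ltW // ltrDl.
  rewrite mulrDl; lra.
move=> e0; pose k := h \+ *%R (- (c + e)).
have k_ac : abs_cont_on a b k.
  by apply: abs_cont_onD; last exact: abs_cont_on_linear.
have : k b <= k a.
  apply: abs_cont_nonincr_ae k_ac _ => //.
  apply: filterS h_dini => t h_t tab.
  have [r r0 hr] := h_t tab e e0; exists r => // s ts st.
  by have := hr s ts st; rewrite /k /= !mulNr mulrBr; lra.
by rewrite /k /= !mulNr mulrBr; lra.
Qed.

End Growth.

Section Trimming.
Variable R : realDomainType.
Implicit Types (o : R) (s : seq R) (P : pred R).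

Local Notation count_lt o s := (count (fun v : R => (v < o)%R) s).
Local Notation count_gt o s := (count (fun v : R => (o < v)%R) s).

Definition trimmed o F s :=
  drop (minn (count_lt o s) F) (take (size s - minn (count_gt o s) F) s).

Lemma sorted_filter_cat s P : sorted <=%R s ->
  (forall v w, v <= w -> P w -> P v) ->
  [seq v <- s | P v] ++ [seq v <- s | ~~ P v] = s.
Proof.
move=> + Pdown; elim: s => //= a s IH; rewrite (path_sortedE le_trans).
move=> /andP[/allP aS /IH {}IH]; case: ifP => Pa /=; first by rewrite IH.
have nPs : all (predC P) s.
  by apply/allP => w /aS aw; apply/negP => /(Pdown _ _ aw); rewrite Pa.
suff -> : [seq v <- s | P v] = [::] by rewrite (all_filterP nPs).
by apply/eqP; rewrite -[_ == _]negbK -has_filter -all_predC.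
Qed.

Lemma sorted_nth_downclosed s P i : sorted <=%R s ->
  (forall v w, v <= w -> P w -> P v) -> (i < size s)%N ->
  P (nth 0 s i) = (i < count P s)%N.
Proof.
move=> ss Pdown isz.
rewrite -[in LHS](sorted_filter_cat ss Pdown) nth_cat size_filter.
case: ltnP => iP.
  have : nth 0 [seq v <- s | P v] i \in [seq v <- s | P v].
    by rewrite mem_nth // size_filter.
  by rewrite mem_filter => /andP[].
have cC : count (fun v => ~~ P v) s = (size s - count P s)%N.
  by rewrite -(count_predC P s) addKn.
change (is_true (count P s <= i)%N) in iP.
have : nth 0 [seq v <- s | ~~ P v] (i - count P s) \in [seq v <- s | ~~ P v].
  by rewrite mem_nth // size_filter cC; lia.
by rewrite mem_filter => /andP[/negbTE].
Qed.

Lemma nth_mem_trimmed o F s i :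
  (minn (count_lt o s) F <= i < size s - minn (count_gt o s) F)%N ->
  nth 0 s i \in trimmed o F s.
Proof.
rewrite /trimmed; set p := minn _ F; set m := (size s - _)%N => /andP[pi im].
have <- : nth 0 (drop p (take m s)) (i - p) = nth 0 s i.
  by rewrite nth_drop subnKC // nth_take.
by apply: mem_nth; rewrite size_drop size_takel ?leq_subr //; lia.
Qed.

Lemma mem_trimmed_nth o F s v : v \in trimmed o F s ->
  exists2 i, (minn (count_lt o s) F <= i < size s - minn (count_gt o s) F)%N &
    v = nth 0 s i.
Proof.
rewrite /trimmed; set p := minn _ F; set m := (size s - _)%N.
case/(nthP 0) => j; rewrite size_drop size_takel ?leq_subr // => jm <-.
by exists (p + j)%N; [lia | rewrite nth_drop nth_take //; lia].
Qed.

Let count_le_gt o s :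
  count (fun v : R => v <= o) s = (size s - count_gt o s)%N.
Proof.
rewrite -(count_predC (fun v => o < v) s) addKn.
by apply: eq_count => v; rewrite /= leNgt.
Qed.

Let count_lt_gt o s : (count_lt o s <= size s - count_gt o s)%N.
Proof. by rewrite -count_le_gt; apply: sub_count => v /ltW. Qed.

Let lt_downclosed o (v w : R) : v <= w -> w < o -> v < o.
Proof. exact: le_lt_trans. Qed.

Let le_downclosed o (v w : R) : v <= w -> w <= o -> v <= o.
Proof. exact: le_trans. Qed.

Lemma trimmed_le o F s : sorted <=%R s -> (count_gt o s <= F)%N ->
  all (fun v => v <= o) (trimmed o F s).
Proof.
move=> ss BF; apply/allP => _ /mem_trimmed_nth[i /andP[_ im] ->].
rewrite (sorted_nth_downclosed ss (@le_downclosed o)).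
  by rewrite count_le_gt; lia.
by lia.
Qed.

Lemma trimmed_ge o F s : sorted <=%R s -> (count_lt o s <= F)%N ->
  all (fun v => o <= v) (trimmed o F s).
Proof.
move=> ss AF; apply/allP => _ /mem_trimmed_nth[i /andP[pi im] ->].
rewrite leNgt (sorted_nth_downclosed ss (@lt_downclosed o)) -?leqNgt; lia.
Qed.

Lemma trimmed_has_lt o F s : sorted <=%R s -> (count_gt o s <= F)%N ->
  (F < count_lt o s)%N -> has (fun v => v < o) (trimmed o F s).
Proof.
move=> ss BF FA; have := count_lt_gt o s => AB.
apply/hasP; exists (nth 0 s F); first by apply: nth_mem_trimmed; lia.
by rewrite (sorted_nth_downclosed ss (@lt_downclosed o)); lia.
Qed.

Lemma trimmed_has_gt o F s : sorted <=%R s -> (count_lt o s <= F)%N ->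
  (F < count_gt o s)%N -> has (fun v => o < v) (trimmed o F s).
Proof.
move=> ss AF FB; have := count_lt_gt o s.
have := count_size (fun v : R => o < v) s => Bs AB.
apply/hasP; exists (nth 0 s (size s - F.+1)).
  by apply: nth_mem_trimmed; lia.
rewrite ltNge (sorted_nth_downclosed ss (@le_downclosed o)).
  by rewrite count_le_gt -leqNgt; lia.
by lia.
Qed.

End Trimming.

Section SignedSums.
Variable R : realDomainType.

Lemma sumr_lt0_has (I : eqType) (r : seq I) (F : I -> R) :
  all (fun i => F i <= 0) r -> has (fun i => F i < 0) r ->
  \sum_(i <- r) F i < 0.
Proof.
elim: r => //= i r IH /andP[Fi Fr]; rewrite big_cons.
have Sr : \sum_(j <- r) F j <= 0.
  by rewrite big_seq sumr_le0 // => j jr; exact: (allP Fr).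
by case/orP => [|/(IH Fr)]; lra.
Qed.

Lemma sumr_gt0_has (I : eqType) (r : seq I) (F : I -> R) :
  all (fun i => 0 <= F i) r -> has (fun i => 0 < F i) r ->
  0 < \sum_(i <- r) F i.
Proof.
move=> F0 F0'; rewrite -oppr_lt0 -sumrN; apply: sumr_lt0_has.
  by apply: sub_all F0 => i; rewrite oppr_le0.
by apply: sub_has F0' => i; rewrite oppr_lt0.
Qed.

End SignedSums.

Section Protocol.
Variables (R : realType) (n : nat) (E : rel 'I_n) (N : {set 'I_n}) (F : nat).
Variables (alpha : R) (g : R -> R) (x : R -> 'I_n -> R).
Variables (y : R -> 'I_n -> 'I_n -> R) (t : R).
Hypotheses (alpha_gt0 : 0 < alpha) (g_incr : {homo g : a b / a < b}).
Hypothesis A_local : F_local E (~: N) F.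

Definition received i :=
  sort <=%R [seq recv N g x y t i j | j <- enum (in_nbrs E i)].

Definition level_set i : {set 'I_n} := [set j in N | x t j == x t i].

Lemma ftrc_inputE i : ftrc_input E N F alpha g x y t i =
  alpha * Num.sg (\sum_(v <- g (x t i) :: trimmed (g (x t i)) F (received i))
                    (v - g (x t i))).
Proof. by []. Qed.

Lemma received_sorted i : sorted <=%R (received i).
Proof. exact/sort_sorted/le_total. Qed.

Lemma count_received i (P : pred R) :
  count P (received i) = #|in_nbrs E i :&: [set j | P (recv N g x y t i j)]|.
Proof.
rewrite count_sort count_map cardE (perm_size (enum_setI _ _)) size_filter.
by apply: eq_count => j; rewrite /= inE.
Qed.

Let misbehaving_in_nbrs i : i \in N -> (#|in_nbrs E i :&: ~: N| <= F)%N.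
Proof. by move=> iN; apply: A_local; rewrite inE negbK. Qed.

Lemma count_received_le i (P : pred R) : i \in N ->
  (forall j, j \in N -> ~~ P (g (x t j))) -> (count P (received i) <= F)%N.
Proof.
move=> iN PN; rewrite count_received.
apply: (leq_trans _ (misbehaving_in_nbrs iN)).
apply/subset_leq_card/finset.setIS/fintype.subsetP => j; rewrite !inE /recv.
by case: ifP => // jN Pj; move: (PN j jN); rewrite Pj.
Qed.

Lemma count_received_gt i (P : pred R) : i \in N ->
  (forall j, j \in N -> x t j != x t i -> P (g (x t j))) ->
  (2 * F + 1 <= #|in_nbrs E i :\: level_set i|)%N ->
  (F < count P (received i))%N.
Proof.
move=> iN PN reach; rewrite count_received.
set A := in_nbrs E i :\: level_set i in reach *.
have normal_in :
    (#|A :&: N| <= #|in_nbrs E i :&: [set j | P (recv N g x y t i j)]|)%N.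
  apply/subset_leq_card/fintype.subsetP => j; rewrite !inE /recv.
  by case/andP=> /andP[jS ->] jN; rewrite jN PN //; move: jS; rewrite jN.
have misbehaving_in : (#|A :\: N| <= F)%N.
  apply: (leq_trans _ (misbehaving_in_nbrs iN)).
  apply/subset_leq_card/fintype.subsetP => j.
  by rewrite !inE => /andP[-> /andP[_ ->]].
by have := cardsID N A; lia.
Qed.

Let own_sum_le0 (o : R) (l : seq R) :
  all (fun v => v <= o) l -> \sum_(v <- o :: l) (v - o) <= 0.
Proof.
move=> /allP lo; rewrite big_cons subrr add0r big_seq sumr_le0 // => v /lo.
by rewrite subr_le0.
Qed.

Let own_sum_ge0 (o : R) (l : seq R) :
  all (fun v => o <= v) l -> 0 <= \sum_(v <- o :: l) (v - o).
Proof.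
move=> /allP lo; rewrite big_cons subrr add0r big_seq sumr_ge0 // => v /lo.
by rewrite subr_ge0.
Qed.

Section Maximal.
Variable i : 'I_n.
Hypotheses (iN : i \in N) (i_max : forall j, j \in N -> x t j <= x t i).

Let count_received_gt_own :
  (count (fun v => (g (x t i) < v)%R) (received i) <= F)%N.
Proof.
by apply: count_received_le => // j /i_max/(ltW_homo g_incr); rewrite leNgt.
Qed.

Lemma ftrc_input_max_le0 : ftrc_input E N F alpha g x y t i <= 0.
Proof.
rewrite ftrc_inputE pmulr_rle0 // sgr_le0.
exact/own_sum_le0/trimmed_le/count_received_gt_own/received_sorted.
Qed.

Lemma ftrc_input_max_reach :
  (2 * F + 1 <= #|in_nbrs E i :\: level_set i|)%N ->
  ftrc_input E N F alpha g x y t i = - alpha.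
Proof.
move=> reach; rewrite ftrc_inputE ltr0_sg ?mulrN1 //.
have kept_le := trimmed_le (received_sorted i) count_received_gt_own.
rewrite big_cons subrr add0r; apply: sumr_lt0_has.
  by apply: sub_all kept_le => v; rewrite subr_le0.
apply: sub_has (trimmed_has_lt (received_sorted _) count_received_gt_own _).
  by move=> v; rewrite subr_lt0.
apply: count_received_gt => // j jN ne; apply: g_incr.
by rewrite lt_neqAle ne i_max.
Qed.

End Maximal.

Section Minimal.
Variable i : 'I_n.
Hypotheses (iN : i \in N) (i_min : forall j, j \in N -> x t i <= x t j).

Let count_received_lt_own :
  (count (fun v => (v < g (x t i))%R) (received i) <= F)%N.
Proof.
by apply: count_received_le => // j /i_min/(ltW_homo g_incr); rewrite leNgt.
Qed.

Lemma ftrc_input_min_ge0 : 0 <= ftrc_input E N F alpha g x y t i.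
Proof.
rewrite ftrc_inputE pmulr_rge0 // sgr_ge0.
exact/own_sum_ge0/trimmed_ge/count_received_lt_own/received_sorted.
Qed.

Lemma ftrc_input_min_reach :
  (2 * F + 1 <= #|in_nbrs E i :\: level_set i|)%N ->
  ftrc_input E N F alpha g x y t i = alpha.
Proof.
move=> reach; rewrite ftrc_inputE gtr0_sg ?mulr1 //.
have kept_ge := trimmed_ge (received_sorted i) count_received_lt_own.
rewrite big_cons subrr add0r; apply: sumr_gt0_has.
  by apply: sub_all kept_ge => v; rewrite subr_ge0.
apply: sub_has (trimmed_has_gt (received_sorted _) count_received_lt_own _).
  by move=> v; rewrite subr_gt0.
apply: count_received_gt => // j jN ne; apply: g_incr.
by rewrite lt_neqAle eq_sym ne i_min.
Qed.

End Minimal.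

End Protocol.

Section VectorExtrema.
Variables (R : realType) (S : finType).
Implicit Types (v : {ffun S -> R}).

Let bigmax_mem (s : seq R) x0 : \big[Num.max/x0]_(a <- s) a \in x0 :: s.
Proof.
elim: s => [|a s IH]; first by rewrite big_nil mem_head.
rewrite big_cons maxEle; case: ifP => _; last by rewrite !inE eqxx orbT.
by move: IH; rewrite !inE => /orP[->|->]; rewrite ?orbT.
Qed.

Let bigmin_mem (s : seq R) x0 : \big[Num.min/x0]_(a <- s) a \in x0 :: s.
Proof.
elim: s => [|a s IH]; first by rewrite big_nil mem_head.
rewrite big_cons minEle; case: ifP => _; first by rewrite !inE eqxx orbT.
by move: IH; rewrite !inE => /orP[->|->]; rewrite ?orbT.
Qed.

Let mem_head_codom v (i0 : S) a :
  a \in head 0 (codom v) :: codom v -> a \in codom v.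
Proof.
have : codom v != [::].
  by rewrite -size_eq0 size_codom -lt0n; apply/card_gt0P; exists i0.
case: (codom v) => //= b l _.
by rewrite inE => /predU1P[->|//]; rewrite mem_head.
Qed.

Lemma Mvec_ge v i : v i <= Mvec v.
Proof. exact: (le_bigmax_seq _ _ xpredT idfun (codom_f v i)). Qed.

Lemma mvec_le v i : mvec v <= v i.
Proof. exact: (ge_bigmin_seq _ _ xpredT idfun (codom_f v i)). Qed.

Lemma Mvec_attained v (i0 : S) : exists i, Mvec v = v i.
Proof.
have := bigmax_mem (codom v) (head 0 (codom v)).
by move=> /(mem_head_codom i0)/codomP[i Mi]; exists i.
Qed.

Lemma mvec_attained v (i0 : S) : exists i, mvec v = v i.
Proof.
have := bigmin_mem (codom v) (head 0 (codom v)).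
by move=> /(mem_head_codom i0)/codomP[i mi]; exists i.
Qed.

Lemma Vvec_card0 v : #|S| = 0%N -> Vvec v = 0.
Proof.
move=> S0; have : codom v = [::] by apply/eqP; rewrite -size_eq0 size_codom S0.
by rewrite /Vvec /Mvec /mvec => ->; rewrite !big_nil subrr.
Qed.

End VectorExtrema.

Section Trajectory.
Variables (R : realType) (n : nat) (E : rel 'I_n) (N : {set 'I_n}) (F : nat).
Variables (alpha : R) (g : R -> R).
Variables (y : R -> 'I_n -> 'I_n -> R) (x : R -> 'I_n -> R).
Hypotheses (alpha_gt0 : 0 < alpha) (g_incr : {homo g : a b / a < b}).
Hypothesis A_local : F_local E (~: N) F.
Hypothesis traj : ftrc_trajectory E N F alpha g y x.
Variable i0 : 'I_n.
Hypothesis i0N : i0 \in N.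

Local Notation mu := (@lebesgue_measure R).
Local Notation u t i := (ftrc_input E N F alpha g x y t i).
Local Notation M t := (Mvec (stateN N x t)).
Local Notation m t := (mvec (stateN N x t)).

Lemma state_le_max t i : i \in N -> x t i <= M t.
Proof.
by move=> iN; have := Mvec_ge (stateN N x t) (exist _ i iN); rewrite ffunE.
Qed.

Lemma min_le_state t i : i \in N -> m t <= x t i.
Proof.
by move=> iN; have := mvec_le (stateN N x t) (exist _ i iN); rewrite ffunE.
Qed.

Lemma max_attained t : exists2 i, i \in N & M t = x t i.
Proof.
have [[i iN] ->] := Mvec_attained (stateN N x t) (exist _ i0 i0N).
by exists i; rewrite ?ffunE.
Qed.

Lemma min_attained t : exists2 i, i \in N & m t = x t i.
Proof.
have [[i iN] ->] := mvec_attained (stateN N x t) (exist _ i0 i0N).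
by exists i; rewrite ?ffunE.
Qed.

Lemma spread_ge0 t : 0 <= M t - m t.
Proof.
by rewrite subr_ge0 (le_trans (min_le_state t i0N) (state_le_max t i0N)).
Qed.

Lemma abs_cont_max b : 0 <= b -> abs_cont_on 0 b (fun t => M t).
Proof.
move=> b0; pose f (j : normal_agent N) s := x s (sval j).
apply: (@abs_cont_on_max _ _ _ _ f).
- by move=> [j jN]; exact: (traj jN).1.
- by move=> s [j jN]; exact: state_le_max.
- by move=> s; have [j jN ->] := max_attained s; exists (exist _ j jN).
Qed.

Lemma abs_cont_negmin b : 0 <= b -> abs_cont_on 0 b (fun t => - m t).
Proof.
move=> b0; pose f (j : normal_agent N) s := - x s (sval j).
apply: (@abs_cont_on_max _ _ _ _ f).
- by move=> [j jN]; apply: abs_cont_onN; exact: (traj jN).1.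
- by move=> s [j jN]; rewrite lerN2; exact: min_le_state.
- by move=> s; have [j jN ->] := min_attained s; exists (exist _ j jN).
Qed.

Definition dini_bounds_at t := forall i, i \in N ->
  left_dini_le (x^~ i) t (u t i) /\ left_dini_le (fun s => - x s i) t (- u t i).

Lemma ae_dini_bounds : {ae mu, forall t, 0 <= t -> dini_bounds_at t}.
Proof.
have ae_deriv : {ae mu, forall t : R, forall j : normal_agent N,
    0 < t -> is_derive t (1 : R) (x^~ (sval j)) (u t (sval j))}.
  by apply: filter_forall => -[j jN]; exact: (traj jN).2.
have ae_nonzero : {ae mu, forall t, t != 0}.
  exists [set 0]; split; [exact: measurable_set1|exact: lebesgue_measure_set1|].
  by move=> t /= /negP; rewrite negbK => /eqP.
apply: filterS2 ae_deriv ae_nonzero => t t_deriv tN0 t0 i iN.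
have t_pos : 0 < t by rewrite lt_neqAle eq_sym tN0.
have x_i := t_deriv (exist _ i iN) t_pos.
by split; apply: is_derive_left_dini_le.
Qed.

Lemma left_dini_max t : dini_bounds_at t -> left_dini_le (fun s => M s) t 0.
Proof.
move=> bounds; have [i iN Mt] := max_attained t.
have u_le0 : u t i <= 0.
  apply: (ftrc_input_max_le0 y alpha_gt0 g_incr A_local iN) => j jN.
  by rewrite -Mt state_le_max.
apply: left_dini_le_trans u_le0 _.
by apply: (left_dini_le_touch _ Mt (bounds i iN).1) => s; exact: state_le_max.
Qed.

Lemma left_dini_negmin t : dini_bounds_at t ->
  left_dini_le (fun s => - m s) t 0.
Proof.
move=> bounds; have [i iN mt] := min_attained t.
have u_ge0 : 0 <= u t i.
  apply: (ftrc_input_min_ge0 y alpha_gt0 g_incr A_local iN) => j jN.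
  by rewrite -mt min_le_state.
apply: (@left_dini_le_trans _ _ _ (- u t i)); first by rewrite oppr_le0.
apply: left_dini_le_touch _ _ (bounds i iN).2; last by rewrite mt.
by move=> s; rewrite lerN2 min_le_state.
Qed.

Lemma max_nonincr a b : 0 <= a -> a <= b -> M b <= M a.
Proof.
move=> a0 ab; rewrite -subr_le0 -(mul0r (b - a)).
have M_ac := abs_cont_on_sub a0 (lexx _) (abs_cont_max (le_trans a0 ab)).
apply: abs_cont_left_dini_growth ab M_ac _.
apply: filterS ae_dini_bounds => t bounds /andP[at_ _].
exact/left_dini_max/bounds/(le_trans a0 at_).
Qed.

Lemma min_nondecr a b : 0 <= a -> a <= b -> m a <= m b.
Proof.
move=> a0 ab; rewrite -lerN2 -subr_le0 -(mul0r (b - a)).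
have m_ac := abs_cont_on_sub a0 (lexx _) (abs_cont_negmin (le_trans a0 ab)).
apply: abs_cont_left_dini_growth ab m_ac _.
apply: filterS ae_dini_bounds => t bounds /andP[at_ _].
exact/left_dini_negmin/bounds/(le_trans a0 at_).
Qed.

Hypothesis robust : r_robust E (2 * F + 1).

Lemma left_dini_spread t : dini_bounds_at t -> m t < M t ->
  left_dini_le (fun s => M s - m s) t (- alpha).
Proof.
move=> bounds mM; have [iM iMN Mt] := max_attained t.
have [im imN mt] := min_attained t.
have level_setE i j : j \in level_set N x t i ->
    level_set N x t j = level_set N x t i.
  by rewrite inE => /andP[_ /eqP xj]; apply/setP => k; rewrite !inE xj.
have level_set0 i : i \in N -> level_set N x t i != finset.set0.
  by move=> iN; apply/set0Pn; exists i; rewrite inE iN eqxx.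
have disj : [disjoint level_set N x t iM & level_set N x t im]%B.
  rewrite -setI_eq0; apply/eqP/setP => j; rewrite !inE.
  apply/negP => /andP[/andP[_ /eqP xjM] /andP[_ /eqP xjm]].
  by move: mM; rewrite Mt mt -xjM -xjm ltxx.
case: (robust (level_set0 _ iMN) (level_set0 _ imN) disj) => -[i iS reach].
- have := iS; rewrite inE => /andP[iN /eqP xi].
  rewrite -(level_setE _ _ iS) in reach.
  have i_max j : j \in N -> x t j <= x t i.
    by move=> jN; rewrite xi -Mt state_le_max.
  rewrite -[- alpha]addr0; apply: left_dini_leD (left_dini_negmin bounds).
  rewrite -(ftrc_input_max_reach y alpha_gt0 g_incr A_local iN i_max reach).
  apply: (left_dini_le_touch _ _ (bounds i iN).1); last by rewrite Mt xi.
  by move=> s; exact: state_le_max.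
- have := iS; rewrite inE => /andP[iN /eqP xi].
  rewrite -(level_setE _ _ iS) in reach.
  have i_min j : j \in N -> x t i <= x t j.
    by move=> jN; rewrite xi -mt min_le_state.
  rewrite -[- alpha]add0r; apply: left_dini_leD (left_dini_max bounds) _.
  rewrite -(ftrc_input_min_reach y alpha_gt0 g_incr A_local iN i_min reach).
  apply: left_dini_le_touch _ _ (bounds i iN).2; last by rewrite mt xi.
  by move=> s; rewrite lerN2 min_le_state.
Qed.

Lemma spread_vanishes t : (M 0 - m 0) / alpha <= t -> M t - m t = 0.
Proof.
move=> Tt; have t0 : 0 <= t.
  by apply: le_trans Tt; rewrite divr_ge0 ?spread_ge0 ?ltW.
apply/eqP; rewrite eq_le spread_ge0 andbT leNgt subr_gt0; apply/negP => mM.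
have spread_ac := abs_cont_onD (abs_cont_max t0) (abs_cont_negmin t0).
have spread_dini : {ae mu, forall r, 0 <= r <= t ->
    left_dini_le (fun s => M s - m s) r (- alpha)}.
  apply: filterS ae_dini_bounds => r bounds /andP[r0 rt].
  apply: left_dini_spread (bounds r0) _.
  exact: le_lt_trans (min_nondecr r0 rt) (lt_le_trans mM (max_nonincr r0 rt)).
have := abs_cont_left_dini_growth t0 spread_ac spread_dini.
by move: Tt; rewrite ler_pdivrMr // /= subr0 mulNr mulrC; lra.
Qed.

End Trajectory.

Theorem theorem5 (R : realType) (n : nat) (E : rel 'I_n) (N : {set 'I_n})
    (alpha : R) (F : nat) (g : R -> R) :
  (2 <= n)%N ->
  irreflexive E ->
  0 < alpha ->
  {homo g : a b / a < b} ->
  F_local E (~: N) F ->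
  r_robust E (2 * F + 1) ->
  forall y : R -> 'I_n -> 'I_n -> R,
    (forall i k, i \in N -> k \notin N ->
       lebesgue_measurable_fun `[0%R, +oo[ (fun t => g (y t i k))) ->
  forall x : R -> 'I_n -> R,
    ftrc_trajectory E N F alpha g y x ->
    (forall t : R, 0 <= t -> forall i, i \in N ->
       mvec (stateN N x 0) <= x t i <= Mvec (stateN N x 0)) /\
    (exists T : {ffun normal_agent N -> R} -> R,
       (forall z, 0 <= T z) /\
       forall t : R, T (stateN N x 0) <= t -> Vvec (stateN N x t) = 0).
Proof.
move=> _ _ alpha_gt0 g_incr A_local robust y _ x traj.
have [N0|[i0 i0N]] := set_0Vmem N.
  split=> [t _ i|]; first by rewrite N0 inE.
  exists (fun _ => 0); split=> // t _; apply: Vvec_card0.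
  by rewrite card_sig; apply: eq_card0 => i; rewrite N0 inE.
have m_nondecr := min_nondecr alpha_gt0 g_incr A_local traj i0N.
have M_nonincr := max_nonincr alpha_gt0 g_incr A_local traj i0N.
split=> [t t0 i iN|].
  rewrite (le_trans (m_nondecr _ _ (lexx 0) t0) (min_le_state x t iN)).
  by rewrite (le_trans (state_le_max x t iN) (M_nonincr _ _ (lexx 0) t0)).
exists (fun z => `|Vvec z| / alpha); split=> [z|t].
  by rewrite divr_ge0 // ltW.
rewrite ger0_norm; last exact: (spread_ge0 x i0N 0).
exact: (spread_vanishes alpha_gt0 g_incr A_local traj i0N robust).
Qed.
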